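(* Let $q>1$ be an integer and $f$ as in the context, and for $\delta\in(0,1]$ let $f_\delta(u)=\frac{f(u)}{1+\sqrt{\delta}|u|^{2q-2}}$. Then there exist constants $\tilde L_f$ and $\tilde l_f$ independent of $\delta$ such that \[ \sup_{u\in\mathbb{R}}f_\delta'(u)\le\tilde L_f,\qquad |f_\delta'(u)|\le\tilde l_f\big(1+(|u|^{2q-2}\wedge\delta^{-1/2})\big)\quad\text{for all }u\in\mathbb{R}. \]
   Context: $f(v)=-c_fv^{2q-1}+f_0(v)$, $v\in\mathbb{R}$, with $c_f>0$ and $f_0:\mathbb{R}\to\mathbb{R}$ twice differentiable satisfying $|f_0(v)|\le c_{f,0}(1+|v|^{2q-2})$ and $|f_0'(v)|+|f_0''(v)|\le c_{f,1}(1+|v|^{2q-3})$ for all $v$, with constants $c_{f,0},c_{f,1}>0$. *)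

From HB Require Import structures.
From mathcomp Require Import all_boot all_order all_algebra.
From mathcomp Require Import all_classical all_reals all_analysis.
Set Implicit Arguments. Unset Strict Implicit. Unset Printing Implicit Defensive.
Import Order.TTheory GRing.Theory Num.Theory.
Local Open Scope ring_scope.

Definition fnl {R : realType} (q : nat) (cf : R) (f0 : R -> R) (v : R) : R :=
  - cf * v ^+ (2 * q - 1) + f0 v.

Definition fdelta {R : realType} (q : nat) (cf : R) (f0 : R -> R) (delta : R)
  (u : R) : R :=
  fnl q cf f0 u / (1 + Num.sqrt delta * `|u| ^+ (2 * q - 2)).

From HB Require Import structures.
From mathcomp Require Import all_boot all_order all_algebra.
From mathcomp Require Import all_classical all_reals all_analysis.
From mathcomp Require Import ring lra zify.
Import Order.TTheory GRing.Theory Num.Theory.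
Local Open Scope ring_scope.

(* Put a = |u|^(2q-2) = u^(2q-2) and g = 1 + sqrt(delta) a >= 1.  The quotient rule gives
   f_delta' = N / g^2 with N = - c_f a g - c_f (2q-2) a + E, where the contribution E of f0
   obeys |E| <= C (1 + |u|^(2q-3)) g.  The two leading terms are nonpositive, so
   f_delta' <= - c_f a + C (1 + |u|^(2q-3)), which is bounded in u because the negative
   term has the higher degree.  For the absolute value, |N| <= L (1 + a) g, and
   (1 + a) / (1 + sqrt(delta) a) <= 1 + min(a, delta^(-1/2)). *)

Section RealInequalities.
Context {R : realFieldType}.
Implicit Types (a b s t cf C K : R).

Lemma exprn_le_1DexprS t n : 0 <= t -> t ^+ n <= 1 + t ^+ n.+1.
Proof.
move=> t_ge0; have tn_ge0 : 0 <= t ^+ n by rewrite exprn_ge0.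
have [t_le1|t_gt1] := leP t 1.
  have : t ^+ n <= 1 by rewrite exprn_ile1.
  have : 0 <= t ^+ n.+1 by rewrite exprn_ge0.
  lra.
have : t ^+ n <= t ^+ n.+1 by rewrite exprS ler_peMl // ltW.
lra.
Qed.

Lemma ratio_le_1Dmin a s : 0 <= a -> 0 < s ->
  (1 + a) / (1 + s * a) <= 1 + Num.min a s^-1.
Proof.
move=> a_ge0 s_gt0; have sa_ge0 : 0 <= s * a by rewrite mulr_ge0 // ltW.
have g_gt0 : 0 < 1 + s * a by lra.
rewrite ler_pdivrMr //; have [_|_] := leP a s^-1.
  nra.
have -> : (1 + s^-1) * (1 + s * a) = 1 + s * a + s^-1 + a.
  by field; rewrite gt_eqF.
have : 0 <= s^-1 by rewrite invr_ge0 ltW.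
lra.
Qed.

Lemma leading_term_bounded cf C t n : 0 < cf -> 0 <= C -> 0 <= t ->
  - cf * t ^+ n.+1 + C * (1 + t ^+ n) <= C * (1 + (1 + C / cf) ^+ n).
Proof.
move=> cf_gt0 C_ge0 t_ge0; set T := 1 + C / cf.
have T_ge1 : 1 <= T by rewrite lerDl divr_ge0 // ltW.
have tn_ge0 : 0 <= t ^+ n by rewrite exprn_ge0.
have [t_le|t_gt] := leP t T.
  have : C * t ^+ n <= C * T ^+ n by rewrite ler_wpM2l // lerXn2r // nnegrE; lra.
  have : 0 <= cf * t ^+ n.+1 by rewrite mulr_ge0 ?exprn_ge0 // ltW.
  lra.
have C_le : C <= cf * t.
  have : cf * T = cf + C by rewrite mulrDr mulr1 mulrCA divff ?mulr1 ?gt_eqF.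
  have : cf * T <= cf * t by rewrite ler_wpM2l // ltW.
  lra.
have : C * t ^+ n <= cf * t ^+ n.+1 by rewrite exprS mulrA ler_wpM2r.
have : 0 <= C * T ^+ n by rewrite mulr_ge0 // exprn_ge0 //; lra.
lra.
Qed.

Lemma norm_remainder_le a b s K c0 c1 d0 fu p :
  0 <= a -> 0 <= b -> 0 <= s <= 1 -> 0 <= K ->
  `|p| <= b -> `|d0| <= c1 * (1 + b) -> `|fu| <= c0 * (1 + a) ->
  `|d0 * (1 + s * a) - fu * s * K * p| <= (c1 + c0 * K) * (1 + b) * (1 + s * a).
Proof.
move=> a_ge0 b_ge0 /andP[s_ge0 s_le1] K_ge0 p_le d0_le fu_le.
have g_ge1 : 1 <= 1 + s * a by rewrite lerDl mulr_ge0.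
have c0_ge0 : 0 <= c0 by rewrite -(pmulr_lge0 _ (_ : 0 < 1 + a)); [exact: le_trans fu_le | lra].
have d0g_le : `|d0 * (1 + s * a)| <= c1 * (1 + b) * (1 + s * a).
  by rewrite normrM (ger0_norm (_ : 0 <= 1 + s * a)) ?ler_wpM2r //; lra.
have key : (1 + a) * s * b <= (1 + b) * (1 + s * a) by nra.
have fup_le : `|fu * s * K * p| <= c0 * K * ((1 + b) * (1 + s * a)).
  rewrite !normrM (ger0_norm s_ge0) (ger0_norm K_ge0).
  apply: (@le_trans _ _ (c0 * K * ((1 + a) * s * b))); last by rewrite ler_wpM2l ?mulr_ge0.
  have fusp_le : `|fu| * s * `|p| <= c0 * (1 + a) * s * b.
    by rewrite ler_pM ?mulr_ge0 // ler_wpM2r.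
  have -> : c0 * K * ((1 + a) * s * b) = (c0 * (1 + a) * s * b) * K by ring.
  have -> : `|fu| * s * K * `|p| = (`|fu| * s * `|p|) * K by ring.
  by rewrite ler_wpM2r.
apply: (le_trans (ler_normB _ _)).
have -> : (c1 + c0 * K) * (1 + b) * (1 + s * a) =
  c1 * (1 + b) * (1 + s * a) + c0 * K * ((1 + b) * (1 + s * a)) by ring.
exact: lerD.
Qed.

End RealInequalities.

Section QuotientBounds.
Context {R : realFieldType} {cf K C a b s E : R}.
Hypotheses (cf_ge0 : 0 <= cf) (K_ge0 : 0 <= K) (a_ge0 : 0 <= a) (s_gt0 : 0 < s).
Hypothesis E_le : `|E| <= C * (1 + b) * (1 + s * a).

Local Notation g := (1 + s * a).
Local Notation N := (- cf * a * g - cf * K * a + E).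

Let g_ge1 : 1 <= g. Proof. by rewrite lerDl mulr_ge0 // ltW. Qed.
Let g_gt0 : 0 < g. Proof. exact: lt_le_trans ltr01 g_ge1. Qed.

Lemma quotient_le M : 0 <= M -> - cf * a + C * (1 + b) <= M -> N / g ^+ 2 <= M.
Proof.
move=> M_ge0 le_M; rewrite ler_pdivrMr ?exprn_gt0 //.
have cfKa_ge0 : 0 <= cf * K * a by rewrite !mulr_ge0.
have N_le : N <= g * (- cf * a + C * (1 + b)).
  have := ler_norm E; have := E_le; lra.
have gM_le : g * M <= M * g ^+ 2.
  by rewrite expr2 mulrA mulrC ler_peMr ?mulr_ge0 // ltW.
apply: (le_trans N_le); apply: le_trans gM_le.
by rewrite ler_wpM2l // ltW.
Qed.

Lemma norm_quotient_le : 0 <= C -> b <= 1 + a ->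
  `|N / g ^+ 2| <= (cf * (1 + K) + 2 * C) * (1 + Num.min a s^-1).
Proof.
move=> C_ge0 b_le; set L := cf * (1 + K) + 2 * C.
have L_ge0 : 0 <= L by rewrite addr_ge0 ?mulr_ge0 // addr_ge0.
have N_le : `|N| <= L * (1 + a) * g.
  have cfag : `|- cf * a * g| = cf * a * g.
    by rewrite !mulNr normrN ger0_norm // !mulr_ge0 // ltW.
  have cfKa : `|cf * K * a| = cf * K * a by rewrite ger0_norm ?mulr_ge0.
  have := ler_normB (- cf * a * g) (cf * K * a); rewrite cfag cfKa.
  have := ler_normD (- cf * a * g - cf * K * a) E.
  have : cf * K * a <= cf * K * (a * g) by rewrite ler_wpM2l ?mulr_ge0 // ler_peMr.
  have b_le2 : 1 + b <= 2 * (1 + a) by move: a_ge0; lra.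
  have : 0 <= C * (2 * (1 + a) - (1 + b)) * g.
    by rewrite !mulr_ge0 ?subr_ge0 // ltW.
  have : 0 <= cf * g by rewrite mulr_ge0 // ltW.
  have : 0 <= cf * K * g by rewrite !mulr_ge0 // ltW.
  have : `|E| <= C * (1 + b) * g := E_le.
  rewrite /L; lra.
rewrite normrM normfV [`|g ^+ 2|]ger0_norm ?exprn_ge0 ?(ltW g_gt0) //.
rewrite ler_pdivrMr ?exprn_gt0 //.
apply: (@le_trans _ _ (L * ((1 + a) / g) * g ^+ 2)); last first.
  by rewrite ler_wpM2r ?exprn_ge0 ?(ltW g_gt0) // ler_wpM2l // ratio_le_1Dmin.
by rewrite expr2 mulrA -(mulrA L) divfK ?gt_eqF.
Qed.

End QuotientBounds.

Section PowerQuotientDerivative.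
Context {R : realType} {m : nat} (cf : R) {s : R} {f0 : R -> R} {u : R}.

Local Notation a := (u ^+ m.+1).
Local Notation g := (1 + s * a).
Local Notation K := (m.+1%:R : R).

Lemma is_derive_pow_quotient : derivable f0 u 1 -> g != 0 ->
  is_derive u 1 (fun x => (- cf * x ^+ m.+2 + f0 x) / (1 + s * x ^+ m.+1))
    ((- cf * a * g - cf * K * a + ('D_1 f0 u * g - f0 u * s * K * u ^+ m))
      / g ^+ 2).
Proof.
move=> f0_der g_neq0.
have dpow c n : is_derive u 1 (fun x : R => c * x ^+ n) (c * (n%:R * u ^+ n.-1)).
  apply: is_deriveZ; rewrite -exprfctE -[X in is_derive _ _ _ X]mulr1.
  exact: is_deriveX.
have dnum := is_deriveD (dpow (- cf) m.+2) (derivableP f0_der).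
have dden := is_deriveD (is_derive_cst (1 : R) u 1) (dpow s m.+1).
have dinv := is_deriveV _ dden.
apply: (is_derive_eq (is_deriveM dnum (dinv g_neq0))).
(* the scalings produced by the derivation rules are products in R *)
rewrite !fctE /GRing.scale /= !exprS !mulrSr; field.
by rewrite -exprS.
Qed.

End PowerQuotientDerivative.

Theorem lemma5p1 (R : realType) (q : nat) (cf cf0 cf1 : R) (f0 : R -> R) :
  (1 < q)%N -> 0 < cf -> 0 < cf0 -> 0 < cf1 ->
  (forall v : R, derivable f0 v 1) ->
  (forall v : R, derivable (derive1 f0) v 1) ->
  (forall v : R, `|f0 v| <= cf0 * (1 + `|v| ^+ (2 * q - 2))) ->
  (forall v : R, `|derive1 f0 v| + `|derive1 (derive1 f0) v|
                   <= cf1 * (1 + `|v| ^+ (2 * q - 3))) ->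
  exists Lt lt : R,
    forall delta : R, 0 < delta <= 1 ->
      forall u : R,
        derive1 (fdelta q cf f0 delta) u <= Lt /\
        `|derive1 (fdelta q cf f0 delta) u|
          <= lt * (1 + Num.min (`|u| ^+ (2 * q - 2)) (Num.sqrt delta)^-1).
Proof.
move=> q_gt1 cf_gt0 cf0_gt0 cf1_gt0 f0_der _ f0_le f0'_le.
set m := (2 * q - 3)%N.
have e1 : (2 * q - 1 = m.+2)%N by rewrite /m; lia.
have e2 : (2 * q - 2 = m.+1)%N by rewrite /m; lia.
rewrite e2 in f0_le *.
have m1_even : ~~ odd m.+1.
  have -> : m.+1 = (2 * (q - 1))%N by rewrite /m; lia.
  by rewrite oddM.
have normX (x : R) : `|x| ^+ m.+1 = x ^+ m.+1.
  by rewrite -normrX ger0_norm ?exprn_even_ge0.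
set K : R := m.+1%:R; set C := cf1 + cf0 * K.
have C_ge0 : 0 <= C by rewrite addr_ge0 ?mulr_ge0 ?ltW.
exists (C * (1 + (1 + C / cf) ^+ m)), (cf * (1 + K) + 2 * C).
move=> delta /andP[delta_gt0 delta_le1] u; set s := Num.sqrt delta.
have s_gt0 : 0 < s by rewrite sqrtr_gt0.
have s_le1 : s <= 1 by rewrite -sqrtr1 ler_wsqrtr.
have fdeltaE : fdelta q cf f0 delta =
    (fun x => (- cf * x ^+ m.+2 + f0 x) / (1 + s * x ^+ m.+1)).
  by apply/funext => x; rewrite /fdelta /fnl e1 e2 normX.
have a_ge0 : 0 <= u ^+ m.+1 by rewrite -normX exprn_ge0.
have g_neq0 : 1 + s * u ^+ m.+1 != 0.
  by rewrite gt_eqF //; have := mulr_ge0 (ltW s_gt0) a_ge0; lra.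
have := is_derive_pow_quotient cf (f0_der u) g_neq0.
rewrite derive1E fdeltaE => fdelta_der; rewrite derive_val -/K normX.
have f0'u_le : `|'D_1 f0 u| <= cf1 * (1 + `|u| ^+ m).
  by apply: le_trans (f0'_le u); rewrite derive1E lerDl.
have E_le : `|'D_1 f0 u * (1 + s * u ^+ m.+1) - f0 u * s * K * u ^+ m|
    <= C * (1 + `|u| ^+ m) * (1 + s * u ^+ m.+1).
  apply: norm_remainder_le => //; first by rewrite ltW.
  - by rewrite normrX.
  - by rewrite -normX f0_le.
have K_ge0 : 0 <= K by rewrite /K.
split.
  apply: (quotient_le (ltW cf_gt0) K_ge0 a_ge0 s_gt0 E_le).
    by rewrite mulr_ge0 // addr_ge0 // exprn_ge0 // addr_ge0 // divr_ge0 // ltW.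
  by rewrite -normX leading_term_bounded.
apply: (norm_quotient_le (ltW cf_gt0) K_ge0 a_ge0 s_gt0 E_le C_ge0).
by rewrite -normX exprn_le_1DexprS.
Qed.
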